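(* Let $p>1$, $N\ge m$, and $\lambda>0$ be fixed. For almost all $(A,y)\in\mathbb R^{m\times N}\times\mathbb R^m$, the unique optimal solution $x^*$ of $\min_{x\in\mathbb R^N}\frac12\|Ax-y\|_2^2+\lambda\|x\|_p^p$ satisfies $|\mathrm{supp}(x^* )|=N$.
   Context: $\|x\|_p:=(\sum_i|x_i|^p)^{1/p}$; $\mathrm{supp}(x)=\{i:x_i\ne0\}$. ''For almost all'' means outside a set of Lebesgue measure zero. *)

From Stdlib Require Import Reals Lra.
Open Scope R_scope.

Fixpoint rsum (n : nat) (f : nat -> R) : R :=
  match n with O => 0 | S k => rsum k f + f k end.
Fixpoint rprod (n : nat) (f : nat -> R) : R :=
  match n with O => 1 | S k => rprod k f * f k end.

(* |t|^p, with the convention 0^p = 0 (Stdlib's Rpower 0 p is 1) *)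
Definition abspow (p t : R) : R :=
  if Req_EM_T t 0 then 0 else Rpower (Rabs t) p.

(* vectors in R^n : functions nat -> R, only indices < n matter;
   matrices in R^{m x N} : functions nat -> nat -> R, indices i<m, j<N *)
Definition matvec (N : nat) (A : nat -> nat -> R) (x : nat -> R) (i : nat) : R :=
  rsum N (fun j => A i j * x j).

Definition objective (m N : nat) (p lam : R) (A : nat -> nat -> R) (y x : nat -> R) : R :=
  / 2 * rsum m (fun i => (matvec N A x i - y i) ^ 2)
  + lam * rsum N (fun j => abspow p (x j)).

Definition is_minimizer (m N : nat) (p lam : R) (A : nat -> nat -> R) (y x : nat -> R) : Prop :=
  forall z : nat -> R, objective m N p lam A y x <= objective m N p lam A y z.

Record box := mkBox {
  Alo : nat -> nat -> R; Ahi : nat -> nat -> R;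
  ylo : nat -> R; yhi : nat -> R }.

Definition box_wf (m N : nat) (b : box) : Prop :=
  (forall i j, (i < m)%nat -> (j < N)%nat -> Alo b i j <= Ahi b i j) /\
  (forall i, (i < m)%nat -> ylo b i <= yhi b i).

Definition in_box (m N : nat) (b : box) (A : nat -> nat -> R) (y : nat -> R) : Prop :=
  (forall i j, (i < m)%nat -> (j < N)%nat -> Alo b i j <= A i j <= Ahi b i j) /\
  (forall i, (i < m)%nat -> ylo b i <= y i <= yhi b i).

Definition box_vol (m N : nat) (b : box) : R :=
  rprod m (fun i => rprod N (fun j => Ahi b i j - Alo b i j))
  * rprod m (fun i => yhi b i - ylo b i).

Definition lebesgue_null (m N : nat) (S : (nat -> nat -> R) -> (nat -> R) -> Prop) : Prop :=
  forall eps : R, 0 < eps ->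
  exists B : nat -> box,
    (forall k, box_wf m N (B k)) /\
    (forall A y, S A y -> exists k, in_box m N (B k) A y) /\
    (forall n, rsum n (fun k => box_vol m N (B k)) <= eps).

From Stdlib Require Import Reals Lra Lia ClassicalEpsilon Classical Cantor.
Open Scope R_scope.

(* The objective is strictly convex and coercive, so it has a unique minimiser [x].
   Since [|t|^p] is differentiable with derivative [0] at [0], if [x j = 0] then [x] also
   minimises the problem with column [j] of [A] deleted, and [sum_i A i j * r i = 0] for the
   residual [r] of that reduced problem. As [r] does not depend on column [j] and depends
   uniformly continuously on the data, wherever [r i <> 0] this relation exhibits [A i j] as a
   uniformly continuous function of the remaining entries: a graph, hence a null set.
   Where [r = 0] the data [y] vanish. The exceptional set is a countable union of such pieces. *)

(** * Finite sums *)

Lemma rsum_ext n f g : (forall k, (k < n)%nat -> f k = g k) -> rsum n f = rsum n g.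
Proof. induction n; simpl; intros H; auto. rewrite IHn, H; auto. Qed.

Lemma rprod_ext n f g : (forall k, (k < n)%nat -> f k = g k) -> rprod n f = rprod n g.
Proof. induction n; simpl; intros H; auto. rewrite IHn, H; auto. Qed.

Lemma rsum_plus n f g : rsum n (fun k => f k + g k) = rsum n f + rsum n g.
Proof. induction n; simpl; [lra|rewrite IHn; lra]. Qed.

Lemma rsum_minus n f g : rsum n (fun k => f k - g k) = rsum n f - rsum n g.
Proof. induction n; simpl; [lra|rewrite IHn; lra]. Qed.

Lemma rsum_scal n c f : rsum n (fun k => c * f k) = c * rsum n f.
Proof. induction n; simpl; [lra|rewrite IHn; lra]. Qed.

Lemma rsum_const n c : rsum n (fun _ => c) = INR n * c.
Proof. induction n; simpl rsum; [simpl; lra|rewrite IHn, S_INR; lra]. Qed.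

Lemma rsum_0 n : rsum n (fun _ => 0) = 0.
Proof. rewrite rsum_const; ring. Qed.

Lemma rsum_le n f g : (forall k, (k < n)%nat -> f k <= g k) -> rsum n f <= rsum n g.
Proof.
  induction n; simpl; intros H; [lra|].
  pose proof (H n ltac:(lia)). pose proof (IHn ltac:(intros; apply H; lia)). lra.
Qed.

Lemma rsum_nonneg n f : (forall k, (k < n)%nat -> 0 <= f k) -> 0 <= rsum n f.
Proof. intros H. rewrite <- (rsum_0 n). apply rsum_le; auto. Qed.

Lemma rsum_abs n f : Rabs (rsum n f) <= rsum n (fun k => Rabs (f k)).
Proof.
  induction n; simpl; [rewrite Rabs_R0; lra|].
  eapply Rle_trans; [apply Rabs_triang|lra].
Qed.

Lemma rsum_isolate n f i : (i < n)%nat ->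
  rsum n f = f i + rsum n (fun k => if Nat.eq_dec k i then 0 else f k).
Proof.
  induction n; intros Hi; [lia|]. simpl. destruct (Nat.eq_dec n i).
  - subst. rewrite (rsum_ext i (fun k => if Nat.eq_dec k i then 0 else f k) f); [lra|].
    intros k Hk. destruct (Nat.eq_dec k i); [lia|auto].
  - rewrite IHn by lia. lra.
Qed.

Lemma rsum_term_le n f k : (forall j, (j < n)%nat -> 0 <= f j) -> (k < n)%nat -> f k <= rsum n f.
Proof.
  intros H Hk. rewrite (rsum_isolate n f k Hk).
  enough (0 <= rsum n (fun j => if Nat.eq_dec j k then 0 else f j)) by lra.
  apply rsum_nonneg. intros j Hj. destruct (Nat.eq_dec j k); [lra|auto].
Qed.

Lemma rsum_lt n f g j : (forall k, (k < n)%nat -> f k <= g k) -> (j < n)%nat -> f j < g j ->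
  rsum n f < rsum n g.
Proof.
  intros H Hj Hfg. rewrite (rsum_isolate n f j Hj), (rsum_isolate n g j Hj).
  enough (rsum n (fun k => if Nat.eq_dec k j then 0 else f k)
          <= rsum n (fun k => if Nat.eq_dec k j then 0 else g k)) by lra.
  apply rsum_le. intros k Hk. destruct (Nat.eq_dec k j); [lra|auto].
Qed.

Lemma rsum_single n i c : (i < n)%nat -> rsum n (fun k => if Nat.eq_dec k i then c else 0) = c.
Proof.
  intros Hi. rewrite (rsum_isolate _ _ i Hi). destruct (Nat.eq_dec i i); [|congruence].
  rewrite (rsum_ext _ _ (fun _ => 0)); [rewrite rsum_0; lra|].
  intros k _. destruct (Nat.eq_dec k i); auto.
Qed.

Lemma rsum_add_len a b f : rsum (a + b) f = rsum a f + rsum b (fun k => f (a + k)%nat).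
Proof.
  induction b; simpl; [rewrite Nat.add_0_r; lra|].
  rewrite Nat.add_succ_r. simpl. rewrite IHb. lra.
Qed.

Lemma rsum_le_len n K f : (forall k, 0 <= f k) -> (n <= K)%nat -> rsum n f <= rsum K f.
Proof. intros H0 H. induction H as [|K' _ IH]; [lra|]. simpl. pose proof (H0 K'). lra. Qed.

Lemma rsum_le_support n K f : (forall k, 0 <= f k) -> (forall k, (K <= k)%nat -> f k = 0) ->
  rsum n f <= rsum K f.
Proof.
  intros H0 H1. induction n as [|n IH]; [apply rsum_le_len; auto; lia|].
  destruct (Nat.le_gt_cases K n).
  - simpl. rewrite H1 by auto. lra.
  - apply rsum_le_len; auto.
Qed.

Lemma rsum_geometric eps D : rsum D (fun a => eps / 2 ^ S a) = eps - eps / 2 ^ D.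
Proof.
  induction D; [simpl; field|].
  change (rsum (S D) _) with (rsum D (fun a => eps / 2 ^ S a) + eps / 2 ^ S D).
  rewrite IHD. simpl. field. apply pow_nonzero. lra.
Qed.

Lemma rprod_add_len a b f : rprod (a + b) f = rprod a f * rprod b (fun k => f (a + k)%nat).
Proof.
  induction b; simpl; [rewrite Nat.add_0_r; lra|].
  rewrite Nat.add_succ_r. simpl. rewrite IHb. lra.
Qed.

Lemma rprod_const n c : rprod n (fun _ => c) = c ^ n.
Proof. induction n; simpl; [auto|rewrite IHn; lra]. Qed.

Lemma rprod_single n i a c : (i < n)%nat ->
  rprod n (fun k => if Nat.eq_dec k i then a else c) = a * c ^ (n - 1).
Proof.
  induction n; intros Hi; [lia|]. simpl rprod. destruct (Nat.eq_dec n i).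
  - subst. rewrite (rprod_ext _ _ (fun _ => c)), rprod_const.
    + replace (S i - 1)%nat with i by lia. lra.
    + intros k Hk. destruct (Nat.eq_dec k i); [lia|auto].
  - rewrite IHn by lia. replace (S n - 1)%nat with (S (n - 1)) by lia. simpl. lra.
Qed.

Lemma rprod_nonneg n f : (forall k, (k < n)%nat -> 0 <= f k) -> 0 <= rprod n f.
Proof. induction n; simpl; intros H; [lra|]. apply Rmult_le_pos; [apply IHn; auto|apply H; lia]. Qed.

Lemma Rmult_le_of_abs_le a b U V : Rabs a <= U -> Rabs b <= V -> a * b <= U * V.
Proof.
  intros. eapply Rle_trans; [apply Rle_abs|]. rewrite Rabs_mult.
  apply Rmult_le_compat; auto; apply Rabs_pos.
Qed.

Lemma orth_entry_sub_le n i (a a' r r' : nat -> R) b R0 d s : (i < n)%nat -> 0 <= d ->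
  rsum n (fun k => a k * r k) = 0 -> rsum n (fun k => a' k * r' k) = 0 ->
  (forall k, (k < n)%nat -> k <> i -> Rabs (a k - a' k) <= d) ->
  (forall k, (k < n)%nat -> Rabs (r k) <= R0) ->
  (forall k, (k < n)%nat -> Rabs (a' k) <= b) ->
  (forall k, (k < n)%nat -> Rabs (r k - r' k) <= s) ->
  Rabs ((a i - a' i) * r i) <= INR n * (d * R0 + b * s) + b * s.
Proof.
  intros Hi Hd He He' Ha Hr Hb Hs.
  set (f := fun k => a k * r k) in He. set (f' := fun k => a' k * r' k) in He'.
  assert (Hiso : f i - f' i = rsum n (fun k => if Nat.eq_dec k i then 0 else f' k - f k)).
  { rewrite (rsum_ext n _ (fun k => (if Nat.eq_dec k i then 0 else f' k)
                                    - (if Nat.eq_dec k i then 0 else f k)))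
      by (intros k _; destruct (Nat.eq_dec k i); ring).
    rewrite rsum_minus. rewrite (rsum_isolate n f i Hi) in He.
    rewrite (rsum_isolate n f' i Hi) in He'. lra. }
  assert (Hrest : Rabs (rsum n (fun k => if Nat.eq_dec k i then 0 else f' k - f k))
                  <= INR n * (d * R0 + b * s)).
  { eapply Rle_trans; [apply rsum_abs|]. rewrite <- rsum_const. apply rsum_le. intros k Hk.
    assert (0 <= d * R0 + b * s).
    { pose proof (Rabs_pos (r k)). pose proof (Rabs_pos (a' k)). pose proof (Rabs_pos (r k - r' k)).
      pose proof (Hr k Hk). pose proof (Hb k Hk). pose proof (Hs k Hk). nra. }
    destruct (Nat.eq_dec k i); [rewrite Rabs_R0; lra|].
    unfold f, f'. replace (a' k * r' k - a k * r k) with (- ((a k - a' k) * r k) - a' k * (r k - r' k)) by ring.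
    eapply Rle_trans; [apply Rabs_triang|]. rewrite !Rabs_Ropp, !Rabs_mult.
    apply Rplus_le_compat; apply Rmult_le_compat; try apply Rabs_pos; auto. }
  replace ((a i - a' i) * r i) with ((f i - f' i) - a' i * (r i - r' i)) by (unfold f, f'; ring).
  eapply Rle_trans; [apply Rabs_triang|]. rewrite Rabs_Ropp, Rabs_mult, Hiso.
  assert (Rabs (a' i) * Rabs (r i - r' i) <= b * s)
    by (apply Rmult_le_compat; try apply Rabs_pos; auto).
  lra.
Qed.

Lemma Rmult_div_add1_le a e : 0 <= a -> 0 < e -> a * (e / (a + 1)) <= e.
Proof.
  intros Ha He. replace (a * (e / (a + 1))) with (e - e / (a + 1)) by (field; lra).
  enough (0 < e / (a + 1)) by lra. apply Rdiv_lt_0_compat; lra.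
Qed.

Lemma Rabs_le_between a b : Rabs a <= b -> - b <= a <= b.
Proof. unfold Rabs. destruct (Rcase_abs a); lra. Qed.

(** * The penalty [|t|^p] *)

Lemma Rpower_pos x y : 0 < Rpower x y.
Proof. apply exp_pos. Qed.

Lemma Rpower_base_1 z : Rpower 1 z = 1.
Proof. unfold Rpower. rewrite ln_1, Rmult_0_r, exp_0. auto. Qed.

Lemma Rpower_pred s p : 0 < s -> Rpower s p = s * Rpower s (p - 1).
Proof. intros. replace p with (1 + (p - 1)) at 1 by ring. rewrite Rpower_plus, Rpower_1; auto. Qed.

Lemma bernoulli_strict s p : 1 < p -> 0 < s -> s <> 1 -> 1 + p * (s - 1) < Rpower s p.
Proof.
  intros Hp Hs Hs1.
  assert (Hd : forall c, 0 < c -> derivable_pt_lim (fun x => Rpower x p) c (p * Rpower c (p - 1)))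
    by (intros; apply derivable_pt_lim_power; auto).
  destruct (Rlt_or_le 1 s) as [H|H].
  - destruct (MVT_cor2 (fun x => Rpower x p) (fun c => p * Rpower c (p - 1)) 1 s H)
      as [c [Hc1 Hc2]]; [intros c Hc; apply Hd; lra|].
    rewrite Rpower_base_1 in Hc1.
    assert (1 < Rpower c (p - 1)) by (rewrite <- (Rpower_O c) at 1 by lra; apply Rpower_lt; lra).
    assert (p * 1 * (s - 1) < p * Rpower c (p - 1) * (s - 1))
      by (apply Rmult_lt_compat_r; [lra|apply Rmult_lt_compat_l; lra]).
    lra.
  - assert (Hs' : s < 1) by lra.
    destruct (MVT_cor2 (fun x => Rpower x p) (fun c => p * Rpower c (p - 1)) s 1 Hs')
      as [c [Hc1 Hc2]]; [intros c Hc; apply Hd; lra|].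
    rewrite Rpower_base_1 in Hc1.
    assert (Rpower c (p - 1) < 1)
      by (rewrite <- (Rpower_base_1 (p - 1)) at 2; apply Rlt_Rpower_l; lra).
    assert (p * Rpower c (p - 1) * (1 - s) < p * 1 * (1 - s))
      by (apply Rmult_lt_compat_r; [lra|apply Rmult_lt_compat_l; lra]).
    lra.
Qed.

Lemma abspow_0 p : abspow p 0 = 0.
Proof. unfold abspow. destruct (Req_EM_T 0 0); [auto|congruence]. Qed.

Lemma abspow_of_pos p t : 0 < t -> abspow p t = Rpower t p.
Proof. intros. unfold abspow. destruct (Req_EM_T t 0); [lra|]. rewrite Rabs_right; lra. Qed.

Lemma abspow_nonneg p t : 0 <= abspow p t.
Proof. unfold abspow. destruct (Req_EM_T t 0); [lra|left; apply Rpower_pos]. Qed.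

Lemma abspow_pos p t : t <> 0 -> 0 < abspow p t.
Proof. intros. unfold abspow. destruct (Req_EM_T t 0); [congruence|apply Rpower_pos]. Qed.

Lemma abspow_eq0 p t : abspow p t = 0 -> t = 0.
Proof. intros H. destruct (Req_EM_T t 0); auto. pose proof (abspow_pos p t n). lra. Qed.

Lemma abspow_abs p t : abspow p (Rabs t) = abspow p t.
Proof.
  unfold abspow. destruct (Req_EM_T t 0), (Req_EM_T (Rabs t) 0); auto.
  - subst. rewrite Rabs_R0 in n. lra.
  - exfalso. apply (Rabs_no_R0 t n e).
  - rewrite Rabs_Rabsolu. auto.
Qed.

Lemma abspow_ge_abs_sub1 p t : 1 <= p -> Rabs t - 1 <= abspow p t.
Proof.
  intros Hp. pose proof (abspow_nonneg p t). destruct (Rle_dec (Rabs t) 1); [lra|].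
  rewrite <- abspow_abs, abspow_of_pos by lra.
  rewrite <- (Rpower_1 (Rabs t)) at 1 by lra.
  pose proof (Rle_Rpower (Rabs t) 1 p ltac:(lra) Hp). lra.
Qed.

Lemma abspow_le_abs p x : 1 < p -> Rabs x <= 1 -> abspow p x <= Rabs x.
Proof.
  intros Hp Hx. rewrite <- abspow_abs. destruct (Req_EM_T (Rabs x) 0) as [E|E].
  - rewrite E, abspow_0; lra.
  - pose proof (Rabs_pos x). rewrite abspow_of_pos, Rpower_pred by lra.
    assert (Rpower (Rabs x) (p - 1) <= 1)
      by (rewrite <- (Rpower_base_1 (p - 1)) at 2; apply Rle_Rpower_l; lra).
    pose proof (Rpower_pos (Rabs x) (p - 1)). nra.
Qed.

Lemma abspow_le_compat p a b : 1 < p -> 0 <= a <= b -> abspow p a <= abspow p b.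
Proof.
  intros Hp Hab. destruct (Req_EM_T a 0).
  - subst. rewrite abspow_0. apply abspow_nonneg.
  - rewrite !abspow_of_pos by lra. apply Rle_Rpower_l; lra.
Qed.

Lemma abspow_tangent_strict p u v : 1 < p -> 0 < u -> 0 <= v -> v <> u ->
  abspow p u + p * Rpower u (p - 1) * (v - u) < abspow p v.
Proof.
  intros Hp Hu Hv Hvu. rewrite abspow_of_pos by auto.
  pose proof (Rpower_pred u p Hu) as Hs. pose proof (Rpower_pos u (p - 1)).
  destruct (Req_EM_T v 0).
  - subst. rewrite abspow_0, Hs.
    assert (0 < u * Rpower u (p - 1)) by (apply Rmult_lt_0_compat; lra). nra.
  - rewrite abspow_of_pos by lra.
    assert (Hv' : v = u * (v / u)) by (field; lra).
    pose proof (bernoulli_strict (v / u) p Hp ltac:(apply Rdiv_lt_0_compat; lra)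
       ltac:(intro He; apply Hvu; rewrite Hv', He; ring)).
    assert (Hvv : Rpower v p = Rpower u p * Rpower (v / u) p).
    { rewrite Rpower_mult_distr by (try apply Rdiv_lt_0_compat; lra). f_equal. field. lra. }
    rewrite Hvv. pose proof (Rpower_pos u p).
    assert (Rpower u p * (1 + p * (v / u - 1)) < Rpower u p * Rpower (v / u) p)
      by (apply Rmult_lt_compat_l; lra).
    assert (Rpower u p * (1 + p * (v / u - 1)) = Rpower u p + p * Rpower u (p - 1) * (v - u))
      by (rewrite Hs; field; lra).
    lra.
Qed.

Lemma abspow_tangent p u v : 1 < p -> 0 < u -> 0 <= v ->
  abspow p u + p * Rpower u (p - 1) * (v - u) <= abspow p v.
Proof.
  intros. destruct (Req_EM_T v u); [subst; lra|].
  left; apply abspow_tangent_strict; auto.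
Qed.

Lemma abspow_convex_nonneg p a b t : 1 < p -> 0 <= a -> 0 <= b -> 0 <= t <= 1 ->
  abspow p ((1 - t) * a + t * b) <= (1 - t) * abspow p a + t * abspow p b.
Proof.
  intros Hp Ha Hb Ht. set (z := (1 - t) * a + t * b).
  assert (0 <= z) by (unfold z; nra).
  pose proof (abspow_nonneg p a). pose proof (abspow_nonneg p b).
  destruct (Req_EM_T z 0) as [E|E]; [rewrite E, abspow_0; nra|].
  pose proof (abspow_tangent p z a Hp ltac:(lra) Ha).
  pose proof (abspow_tangent p z b Hp ltac:(lra) Hb).
  set (g := p * Rpower z (p - 1)) in *.
  assert ((1 - t) * (abspow p z + g * (a - z)) + t * (abspow p z + g * (b - z)) = abspow p z)
    by (unfold z; ring).
  assert ((1 - t) * (abspow p z + g * (a - z)) <= (1 - t) * abspow p a)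
    by (apply Rmult_le_compat_l; lra).
  assert (t * (abspow p z + g * (b - z)) <= t * abspow p b) by (apply Rmult_le_compat_l; lra).
  lra.
Qed.

Lemma abspow_convex p a b t : 1 < p -> 0 <= t <= 1 ->
  abspow p ((1 - t) * a + t * b) <= (1 - t) * abspow p a + t * abspow p b.
Proof.
  intros Hp Ht. rewrite <- abspow_abs, <- (abspow_abs p a), <- (abspow_abs p b).
  eapply Rle_trans; [apply abspow_le_compat; auto|apply abspow_convex_nonneg; auto; apply Rabs_pos].
  split; [apply Rabs_pos|]. eapply Rle_trans; [apply Rabs_triang|].
  rewrite !Rabs_mult, (Rabs_right t), (Rabs_right (1 - t)) by lra. lra.
Qed.

Lemma abspow_midpoint_strict_nonneg p a b : 1 < p -> 0 <= a -> 0 <= b -> a <> b ->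
  abspow p ((a + b) / 2) < (abspow p a + abspow p b) / 2.
Proof.
  intros Hp Ha Hb Hab. set (z := (a + b) / 2). assert (0 < z) by (unfold z; lra).
  pose proof (abspow_tangent_strict p z a Hp H Ha ltac:(unfold z; lra)).
  pose proof (abspow_tangent_strict p z b Hp H Hb ltac:(unfold z; lra)).
  set (g := p * Rpower z (p - 1)) in *.
  assert (g * (a - z) + g * (b - z) = 0) by (unfold z; field). lra.
Qed.

Lemma abspow_midpoint_strict p a b : 1 < p -> a <> b ->
  abspow p ((a + b) / 2) < (abspow p a + abspow p b) / 2.
Proof.
  intros Hp Hab.
  rewrite <- (abspow_abs p ((a + b) / 2)), <- (abspow_abs p a), <- (abspow_abs p b).
  destruct (Req_EM_T (Rabs a) (Rabs b)) as [E|E].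
  - assert (a = - b) by (unfold Rabs in E; destruct (Rcase_abs a), (Rcase_abs b); lra).
    subst. replace ((- b + b) / 2) with 0 by field. rewrite Rabs_R0, abspow_0.
    pose proof (abspow_pos p (Rabs (- b)) ltac:(apply Rabs_no_R0; lra)).
    pose proof (abspow_nonneg p (Rabs b)). lra.
  - eapply Rle_lt_trans; [|apply abspow_midpoint_strict_nonneg; auto; apply Rabs_pos].
    apply abspow_le_compat; auto. split; [apply Rabs_pos|].
    replace ((a + b) / 2) with (/ 2 * a + / 2 * b) by field.
    eapply Rle_trans; [apply Rabs_triang|]. rewrite !Rabs_mult, Rabs_right by lra. lra.
Qed.

Lemma abspow_lt_linear p lam c : 1 < p -> 0 < lam -> 0 < c ->
  exists s, 0 < s /\ lam * abspow p s < s * c.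
Proof.
  intros Hp Hl Hc. set (s := Rpower (c / (2 * lam)) (/ (p - 1))). exists s.
  assert (0 < s) by apply Rpower_pos. split; auto.
  rewrite abspow_of_pos, Rpower_pred by auto.
  unfold s at 2. rewrite Rpower_mult. replace (/ (p - 1) * (p - 1)) with 1 by (field; lra).
  rewrite Rpower_1 by (apply Rdiv_lt_0_compat; lra).
  replace (lam * (s * (c / (2 * lam)))) with (s * c / 2) by (field; lra). nra.
Qed.

Lemma continuity_pt_eps f x : continuity_pt f x <->
  (forall eps, 0 < eps -> exists d, 0 < d /\
     forall y, Rabs (y - x) < d -> Rabs (f y - f x) < eps).
Proof.
  unfold continuity_pt, continue_in, limit1_in, limit_in, D_x, no_cond, dist;
    simpl; unfold R_dist. split.
  - intros H eps He. destruct (H eps He) as [d [Hd H']]. exists d; split; auto.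
    intros y Hy. destruct (Req_EM_T y x); [subst; rewrite Rminus_diag, Rabs_R0; auto|].
    apply H'. split; auto.
  - intros H eps He. destruct (H eps He) as [d [Hd H']]. exists d; split; auto.
    intros y [_ Hy]. auto.
Qed.

Lemma abspow_continuous p t : 1 < p -> continuity_pt (abspow p) t.
Proof.
  intros Hp. destruct (Req_EM_T t 0) as [->|Ht].
  - apply continuity_pt_eps. intros eps He. exists (Rmin 1 eps). split; [apply Rmin_pos; lra|].
    intros y Hy. rewrite abspow_0, Rminus_0_r in *.
    rewrite Rabs_right by apply Rle_ge, abspow_nonneg.
    pose proof (Rmin_l 1 eps). pose proof (Rmin_r 1 eps).
    pose proof (abspow_le_abs p y Hp ltac:(lra)). lra.
  - pose proof (Rabs_pos t) as Hpos. pose proof (Rabs_no_R0 t Ht) as Hnz.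
    assert (Hc : continuity_pt (fun x => Rpower (Rabs x) p) t).
    { apply (continuity_pt_comp Rabs (fun x => Rpower x p)); [apply Rcontinuity_abs|].
      apply derivable_continuous_pt. exists (p * Rpower (Rabs t) (p - 1)).
      apply derivable_pt_lim_power. lra. }
    rewrite continuity_pt_eps in Hc |- *. intros eps He. destruct (Hc eps He) as [d [Hd Hcd]].
    exists (Rmin d (Rabs t)). split; [apply Rmin_pos; lra|].
    intros y Hy. pose proof (Rmin_l d (Rabs t)). pose proof (Rmin_r d (Rabs t)).
    assert (y <> 0) by (intro; subst; rewrite Rminus_0_l, Rabs_Ropp in Hy; lra).
    unfold abspow. destruct (Req_EM_T y 0); [congruence|].
    destruct (Req_EM_T t 0); [congruence|]. apply Hcd. lra.
Qed.

Lemma continuity_pt_lipschitz_at f t0 C : 0 <= C ->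
  (forall s, Rabs (s - t0) <= 1 -> Rabs (f s - f t0) <= C * Rabs (s - t0)) ->
  continuity_pt f t0.
Proof.
  intros HC H. apply continuity_pt_eps. intros eps He.
  exists (Rmin 1 (eps / (C + 1))). split; [apply Rmin_pos; [lra|apply Rdiv_lt_0_compat; lra]|].
  intros s Hs. pose proof (Rmin_l 1 (eps / (C + 1))). pose proof (Rmin_r 1 (eps / (C + 1))).
  eapply Rle_lt_trans; [apply H; lra|].
  apply Rle_lt_trans with (C * (eps / (C + 1))); [apply Rmult_le_compat_l; lra|].
  apply Rmult_lt_reg_r with (C + 1); [lra|].
  replace (C * (eps / (C + 1)) * (C + 1)) with (C * eps) by (field; lra). nra.
Qed.

Lemma continuous_coercive_has_min h : (forall t, continuity_pt h t) ->
  (exists T, forall t, T < Rabs t -> h 0 <= h t) -> exists ts, forall t, h ts <= h t.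
Proof.
  intros Hc [T HT]. pose proof (Rmax_l T 0). pose proof (Rmax_r T 0).
  destruct (continuity_ab_min h (- Rmax T 0) (Rmax T 0) ltac:(lra) (fun c _ => Hc c))
    as [ts [Hts _]].
  exists ts. intros t. destruct (Rle_dec (Rabs t) (Rmax T 0)) as [Ht|Ht].
  - apply Hts. unfold Rabs in Ht; destruct (Rcase_abs t); lra.
  - pose proof (HT t ltac:(lra)). pose proof (Hts 0 ltac:(lra)). lra.
Qed.

(** * The objective and its minimiser *)

Definition upd (w : nat -> R) (j : nat) (s : R) : nat -> R :=
  fun k => if Nat.eq_dec k j then s else w k.

Definition zero_col (A : nat -> nat -> R) (j : nat) : nat -> nat -> R :=
  fun i k => if Nat.eq_dec k j then 0 else A i k.

Lemma matvec_lin N A x v a b i :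
  matvec N A (fun j => a * x j + b * v j) i = a * matvec N A x i + b * matvec N A v i.
Proof. unfold matvec. rewrite <- !rsum_scal, <- rsum_plus. apply rsum_ext. intros; ring. Qed.

Lemma matvec_ext N A x v i : (forall j, (j < N)%nat -> x j = v j) ->
  matvec N A x i = matvec N A v i.
Proof. intros H. apply rsum_ext. intros. rewrite H; auto. Qed.

Lemma matvec_0 N A i : matvec N A (fun _ => 0) i = 0.
Proof. unfold matvec. rewrite (rsum_ext _ _ (fun _ => 0)); [apply rsum_0|intros; ring]. Qed.

Lemma matvec_upd N A x j s i : (j < N)%nat ->
  matvec N A (upd x j s) i - matvec N A x i = A i j * (s - x j).
Proof.
  intros Hj. unfold matvec. rewrite <- rsum_minus.
  rewrite (rsum_ext _ _ (fun k => if Nat.eq_dec k j then A i j * (s - x j) else 0)).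
  - apply rsum_single; auto.
  - intros k _. unfold upd. destruct (Nat.eq_dec k j); [subst|]; ring.
Qed.

Lemma matvec_zero_col N A j w i : matvec N (zero_col A j) w i = matvec N A (upd w j 0) i.
Proof. apply rsum_ext. intros k _. unfold zero_col, upd. destruct (Nat.eq_dec k j); ring. Qed.

Lemma penalty_upd N p x j s : (j < N)%nat ->
  rsum N (fun k => abspow p (upd x j s k)) - rsum N (fun k => abspow p (x k))
  = abspow p s - abspow p (x j).
Proof.
  intros Hj. rewrite <- rsum_minus.
  rewrite (rsum_ext _ _ (fun k => if Nat.eq_dec k j then abspow p s - abspow p (x j) else 0)).
  - apply rsum_single; auto.
  - intros k _. unfold upd. destruct (Nat.eq_dec k j); [subst|]; ring.
Qed.

Lemma le_of_le_add_small a b q : 0 <= q -> (forall t, 0 < t <= 1 -> a <= b + t * q) -> a <= b.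
Proof.
  intros Hq H. destruct (Rle_dec a b) as [|Hab]; auto. exfalso.
  set (t := Rmin 1 ((a - b) / (q + 1))).
  assert (0 < (a - b) / (q + 1)) by (apply Rdiv_lt_0_compat; lra).
  assert (Ht : 0 < t <= 1) by (unfold t; split; [apply Rmin_pos; lra|apply Rmin_l]).
  pose proof (H t Ht). pose proof (Rmin_r 1 ((a - b) / (q + 1))) as Hmin. fold t in Hmin.
  assert (t * (q + 1) <= a - b).
  { apply Rmult_le_reg_r with (/ (q + 1)); [apply Rinv_0_lt_compat; lra|].
    replace (t * (q + 1) * / (q + 1)) with t by (field; lra). auto. }
  nra.
Qed.

Section Objective.

Variables (m : nat) (p lam : R).
Hypotheses (hp : 1 < p) (hlam : 0 < lam).

Local Notation obj N A y x := (objective m N p lam A y x).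
Local Notation penalty N x := (rsum N (fun j => abspow p (x j))).
Local Notation sqnorm y := (rsum m (fun i => y i ^ 2)).

Lemma penalty_nonneg N x : 0 <= penalty N x.
Proof. apply rsum_nonneg. intros; apply abspow_nonneg. Qed.

Lemma objective_nonneg N A y x : 0 <= obj N A y x.
Proof.
  unfold objective. pose proof (penalty_nonneg N x).
  assert (0 <= rsum m (fun i => (matvec N A x i - y i) ^ 2))
    by (apply rsum_nonneg; intros; apply pow2_ge_0).
  nra.
Qed.

Lemma objective_ext N A y x x' : (forall j, (j < N)%nat -> x j = x' j) ->
  obj N A y x = obj N A y x'.
Proof.
  intros H. unfold objective. f_equal; f_equal; apply rsum_ext; intros k Hk.
  - rewrite (matvec_ext N A x x'); auto.
  - rewrite H; auto.
Qed.

Lemma objective_S N A y z :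
  obj (S N) A y z = obj N A (fun i => y i - A i N * z N) z + lam * abspow p (z N).
Proof.
  unfold objective, matvec. simpl rsum. rewrite Rmult_plus_distr_l.
  erewrite (rsum_ext m _ _).
  2:{ intros i _.
      replace (rsum N (fun j => A i j * z j) + A i N * z N - y i)
        with (rsum N (fun j => A i j * z j) - (y i - A i N * z N)) by ring.
      reflexivity. }
  ring.
Qed.

Lemma objective_shift N A y y' w :
  obj N A y' w = obj N A y w + rsum m (fun i => (matvec N A w i - y i) * (y i - y' i))
                 + / 2 * rsum m (fun i => (y i - y' i) ^ 2).
Proof.
  unfold objective.
  assert (rsum m (fun i => (matvec N A w i - y' i) ^ 2)
          = rsum m (fun i => (matvec N A w i - y i) ^ 2)
            + 2 * rsum m (fun i => (matvec N A w i - y i) * (y i - y' i))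
            + rsum m (fun i => (y i - y' i) ^ 2)) as ->.
  { rewrite <- rsum_scal, <- !rsum_plus. apply rsum_ext. intros; ring. }
  lra.
Qed.

Lemma minimizer_le_zero N A y x : is_minimizer m N p lam A y x ->
  rsum m (fun i => (matvec N A x i - y i) ^ 2) <= sqnorm y /\ lam * penalty N x <= / 2 * sqnorm y.
Proof.
  intros H. pose proof (H (fun _ => 0)) as H0. unfold objective in H0.
  rewrite (rsum_ext m (fun i => (matvec N A (fun _ => 0) i - y i) ^ 2) (fun i => y i ^ 2)) in H0
    by (intros; rewrite matvec_0; ring).
  rewrite (rsum_ext N (fun j => abspow p 0) (fun _ => 0)), rsum_0 in H0 by (intros; apply abspow_0).
  pose proof (penalty_nonneg N x).
  assert (0 <= rsum m (fun i => (matvec N A x i - y i) ^ 2))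
    by (apply rsum_nonneg; intros; apply pow2_ge_0).
  split; nra.
Qed.

Lemma minimizer_residual_le N A y x : is_minimizer m N p lam A y x ->
  forall i, (i < m)%nat -> Rabs (matvec N A x i - y i) <= sqnorm y + 1.
Proof.
  intros Hx i Hi. destruct (minimizer_le_zero N A y x Hx) as [H _].
  pose proof (rsum_term_le m (fun i => (matvec N A x i - y i) ^ 2) i
                (fun _ _ => pow2_ge_0 _) Hi). cbv beta in *.
  set (r := matvec N A x i - y i) in *.
  assert (Rabs r <= r ^ 2 + 1) by (unfold Rabs; destruct (Rcase_abs r); nra). lra.
Qed.

Lemma objective_shift_le N A y y' w w' : obj N A y' w' <= obj N A y' w ->
  obj N A y' w' - obj N A y w
  <= rsum m (fun i => Rabs (matvec N A w i - y i) * Rabs (y i - y' i))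
     + / 2 * rsum m (fun i => (y i - y' i) ^ 2).
Proof.
  intros H. rewrite (objective_shift N A y y' w) in H.
  enough (rsum m (fun i => (matvec N A w i - y i) * (y i - y' i))
          <= rsum m (fun i => Rabs (matvec N A w i - y i) * Rabs (y i - y' i))) by lra.
  apply rsum_le. intros. rewrite <- Rabs_mult. apply Rle_abs.
Qed.

Lemma min_value_shift_le N A y c t u w w' E :
  is_minimizer m N p lam A (fun i => y i - c i * u) w' -> Rabs (u - t) <= 1 ->
  (forall i, (i < m)%nat -> Rabs (matvec N A w i - (y i - c i * t)) <= E) ->
  obj N A (fun i => y i - c i * u) w' - obj N A (fun i => y i - c i * t) w
  <= (rsum m (fun i => E * Rabs (c i)) + / 2 * rsum m (fun i => c i ^ 2)) * Rabs (u - t).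
Proof.
  intros Hw' Hut HE. eapply Rle_trans; [apply objective_shift_le, Hw'|].
  rewrite Rmult_plus_distr_r, Rmult_assoc, !(Rmult_comm _ (Rabs (u - t))), <- !rsum_scal.
  apply Rplus_le_compat; apply rsum_le; intros i Hi;
    replace (y i - c i * t - (y i - c i * u)) with (c i * (u - t)) by ring.
  - rewrite Rabs_mult. pose proof (HE i Hi).
    assert (0 <= Rabs (c i) * Rabs (u - t)) by (apply Rmult_le_pos; apply Rabs_pos). nra.
  - assert ((u - t) ^ 2 <= Rabs (u - t)) by (unfold Rabs in *; destruct (Rcase_abs (u - t)); nra).
    rewrite Rpow_mult_distr. pose proof (pow2_ge_0 (c i)). nra.
Qed.

Lemma min_value_lipschitz N A y c W :
  (forall t, is_minimizer m N p lam A (fun i => y i - c i * t) (W t)) -> forall t0,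
  exists C, 0 <= C /\ forall s, Rabs (s - t0) <= 1 ->
    Rabs (obj N A (fun i => y i - c i * s) (W s) - obj N A (fun i => y i - c i * t0) (W t0))
    <= C * Rabs (s - t0).
Proof.
  intros HW t0. set (E := rsum m (fun k => (Rabs (y k) + Rabs (c k) * (Rabs t0 + 1)) ^ 2) + 1).
  assert (HE : forall t, Rabs (t - t0) <= 1 -> forall i, (i < m)%nat ->
                 Rabs (matvec N A (W t) i - (y i - c i * t)) <= E).
  { intros t Ht i Hi. eapply Rle_trans; [apply (minimizer_residual_le N A _ _ (HW t) i Hi)|].
    unfold E. apply Rplus_le_compat_r, rsum_le. intros k _. apply pow_maj_Rabs.
    eapply Rle_trans; [apply Rabs_triang|]. rewrite Rabs_Ropp, Rabs_mult.
    apply Rplus_le_compat_l, Rmult_le_compat_l; [apply Rabs_pos|].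
    pose proof (Rabs_triang_inv t t0). lra. }
  assert (HE0 : 0 <= E) by (unfold E; pose proof (rsum_nonneg m
    (fun k => (Rabs (y k) + Rabs (c k) * (Rabs t0 + 1)) ^ 2) (fun _ _ => pow2_ge_0 _)); lra).
  exists (rsum m (fun i => E * Rabs (c i)) + / 2 * rsum m (fun i => c i ^ 2)). split.
  - assert (0 <= rsum m (fun i => E * Rabs (c i)))
      by (apply rsum_nonneg; intros; apply Rmult_le_pos; auto; apply Rabs_pos).
    assert (0 <= rsum m (fun i => c i ^ 2)) by (apply rsum_nonneg; intros; apply pow2_ge_0).
    lra.
  - intros s Hs. apply Rabs_le. split.
    + assert (Hs' : Rabs (t0 - s) <= 1) by (rewrite Rabs_minus_sym; lra).
      pose proof (min_value_shift_le N A y c s t0 (W s) (W t0) E (HW t0) Hs' (HE s Hs)).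
      rewrite Rabs_minus_sym in H. lra.
    + apply min_value_shift_le; auto. apply HE. rewrite Rminus_diag, Rabs_R0. lra.
Qed.

Lemma minimizer_exists N A y : exists x, is_minimizer m N p lam A y x.
Proof.
  revert y. induction N as [|N IH]; intros y.
  - exists (fun _ => 0). intros z. unfold objective, matvec. simpl. lra.
  - set (ys := fun t i => y i - A i N * t).
    set (W := fun t => proj1_sig (constructive_indefinite_description _ (IH (ys t)))).
    assert (HW : forall t, is_minimizer m N p lam A (ys t) (W t))
      by (intros t; unfold W; destruct constructive_indefinite_description; auto).
    set (h := fun t => obj N A (ys t) (W t) + lam * abspow p t).
    destruct (continuous_coercive_has_min h) as [ts Hts].
    + intros t. apply continuity_pt_plus.
      * destruct (min_value_lipschitz N A y (fun i => A i N) W HW t) as [C [HC Hlip]].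
        apply (continuity_pt_lipschitz_at _ t C HC Hlip).
      * apply continuity_pt_scal, abspow_continuous; auto.
    + exists (h 0 / lam + 1). intros t Ht. unfold h at 2.
      pose proof (objective_nonneg N A (ys t) (W t)).
      pose proof (abspow_ge_abs_sub1 p t ltac:(lra)).
      assert (h 0 < lam * (Rabs t - 1)).
      { apply Rmult_lt_reg_l with (/ lam); [apply Rinv_0_lt_compat; auto|].
        replace (/ lam * (lam * (Rabs t - 1))) with (Rabs t - 1) by (field; lra).
        unfold Rdiv in Ht. rewrite Rmult_comm. lra. }
      assert (lam * (Rabs t - 1) <= lam * abspow p t) by (apply Rmult_le_compat_l; lra).
      lra.
    + exists (upd (W ts) N ts). intros z.
      assert (Hu : upd (W ts) N ts N = ts) by (unfold upd; destruct (Nat.eq_dec N N); congruence).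
      rewrite !objective_S, Hu.
      rewrite (objective_ext N A _ (upd (W ts) N ts) (W ts))
        by (intros j Hj; unfold upd; destruct (Nat.eq_dec j N); [lia|auto]).
      pose proof (Hts (z N)). pose proof (HW (z N) z). unfold h, ys in *. lra.
Qed.

Lemma objective_midpoint_lt N A y x z j : (j < N)%nat -> x j <> z j ->
  obj N A y (fun k => / 2 * x k + / 2 * z k) < (obj N A y x + obj N A y z) / 2.
Proof.
  intros Hj Hxz. set (mid := fun k => / 2 * x k + / 2 * z k). unfold objective.
  assert (rsum m (fun i => (matvec N A mid i - y i) ^ 2) <=
          (rsum m (fun i => (matvec N A x i - y i) ^ 2)
           + rsum m (fun i => (matvec N A z i - y i) ^ 2)) / 2).
  { unfold Rdiv. rewrite Rmult_comm, <- rsum_plus, <- rsum_scal. apply rsum_le. intros i _.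
    unfold mid. rewrite matvec_lin. set (a := matvec N A x i). set (b := matvec N A z i).
    pose proof (pow2_ge_0 (a - b)). nra. }
  assert (penalty N mid < (penalty N x + penalty N z) / 2).
  { unfold Rdiv. rewrite Rmult_comm, <- rsum_plus, <- rsum_scal. apply (rsum_lt _ _ _ j); auto.
    - intros k _. unfold mid.
      replace (/ 2 * x k + / 2 * z k) with ((1 - / 2) * x k + / 2 * z k) by field.
      pose proof (abspow_convex p (x k) (z k) (/ 2) hp ltac:(lra)). lra.
    - unfold mid. replace (/ 2 * x j + / 2 * z j) with ((x j + z j) / 2) by field.
      pose proof (abspow_midpoint_strict p (x j) (z j) hp Hxz). lra. }
  assert (lam * penalty N mid < lam * ((penalty N x + penalty N z) / 2))
    by (apply Rmult_lt_compat_l; auto).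
  lra.
Qed.

Lemma minimizer_unique N A y x z :
  is_minimizer m N p lam A y x -> is_minimizer m N p lam A y z ->
  forall j, (j < N)%nat -> z j = x j.
Proof.
  intros Hx Hz j Hj. destruct (Req_EM_T (z j) (x j)) as [|Hne]; auto. exfalso.
  pose proof (objective_midpoint_lt N A y x z j Hj (not_eq_sym Hne)).
  pose proof (Hx (fun k => / 2 * x k + / 2 * z k)). pose proof (Hx z). pose proof (Hz x). lra.
Qed.

Lemma minimizer_variational N A y x : is_minimizer m N p lam A y x -> forall v,
  rsum m (fun i => (y i - matvec N A x i) * (matvec N A v i - matvec N A x i))
  <= lam * penalty N v - lam * penalty N x.
Proof.
  intros Hmin v.
  set (S := rsum m (fun i => (y i - matvec N A x i) * (matvec N A v i - matvec N A x i))).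
  set (Q := rsum m (fun i => (matvec N A v i - matvec N A x i) ^ 2)).
  assert (HQ : 0 <= Q / 2) by (enough (0 <= Q) by lra; apply rsum_nonneg; intros; apply pow2_ge_0).
  apply (le_of_le_add_small _ _ (Q / 2) HQ). intros t Ht.
  set (z := fun j => (1 - t) * x j + t * v j).
  pose proof (Hmin z) as Hz. unfold objective in Hz.
  assert (Esq : rsum m (fun i => (matvec N A z i - y i) ^ 2)
                = rsum m (fun i => (matvec N A x i - y i) ^ 2) - 2 * t * S + t ^ 2 * Q).
  { unfold S, Q. rewrite <- rsum_scal, <- (rsum_scal m (t ^ 2)), <- rsum_minus, <- rsum_plus.
    apply rsum_ext. intros i _. unfold z. rewrite matvec_lin. ring. }
  assert (Epen : penalty N z <= (1 - t) * penalty N x + t * penalty N v).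
  { rewrite <- !rsum_scal, <- rsum_plus. apply rsum_le. intros j _.
    unfold z. apply abspow_convex; lra. }
  rewrite Esq in Hz.
  assert (lam * penalty N z <= lam * ((1 - t) * penalty N x + t * penalty N v))
    by (apply Rmult_le_compat_l; lra).
  apply Rmult_le_reg_l with t; [lra|]. nra.
Qed.

(* The variational inequality in the direction of [e_j], where [|.|^p] has derivative [0]. *)
Lemma minimizer_zero_coord N A y x j : is_minimizer m N p lam A y x -> (j < N)%nat -> x j = 0 ->
  rsum m (fun i => A i j * (y i - matvec N A x i)) = 0.
Proof.
  intros Hx Hj Hx0. set (c := rsum m (fun i => A i j * (y i - matvec N A x i))).
  assert (Hs : forall s, s * c <= lam * abspow p s).
  { intros s. pose proof (minimizer_variational N A y x Hx (upd x j s)) as H.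
    rewrite (rsum_ext m _ (fun i => s * (A i j * (y i - matvec N A x i)))), rsum_scal in H.
    - rewrite <- Rmult_minus_distr_l, penalty_upd, Hx0, abspow_0 in H by auto. fold c in H. lra.
    - intros i _. rewrite matvec_upd, Hx0 by auto. ring. }
  destruct (Rtotal_order c 0) as [Hc|[Hc|Hc]]; auto; exfalso.
  - destruct (abspow_lt_linear p lam (- c) hp hlam ltac:(lra)) as [s [Hs0 Hs1]].
    pose proof (Hs (- s)). rewrite <- (abspow_abs p (- s)), Rabs_Ropp, Rabs_right in H by lra.
    lra.
  - destruct (abspow_lt_linear p lam c hp hlam ltac:(lra)) as [s [Hs0 Hs1]].
    pose proof (Hs s). lra.
Qed.

Lemma minimizer_zero_residual N A y x : is_minimizer m N p lam A y x ->
  (forall i, (i < m)%nat -> y i = matvec N A x i) -> forall i, (i < m)%nat -> y i = 0.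
Proof.
  intros Hx Hr i Hi.
  pose proof (minimizer_variational N A y x Hx (fun _ => 0)) as H.
  rewrite (rsum_ext m _ (fun _ => 0)) in H by (intros k Hk; rewrite Hr; auto; ring).
  rewrite (rsum_ext N (fun j => abspow p 0) (fun _ => 0)), !rsum_0 in H by (intros; apply abspow_0).
  assert (Hpen : penalty N x = 0) by (pose proof (penalty_nonneg N x); nra).
  assert (Hx0 : forall k, (k < N)%nat -> x k = 0).
  { intros k Hk. apply (abspow_eq0 p).
    pose proof (rsum_term_le N (fun j => abspow p (x j)) k (fun _ _ => abspow_nonneg _ _) Hk).
    pose proof (abspow_nonneg p (x k)). simpl in *. lra. }
  rewrite Hr, (matvec_ext N A x (fun _ => 0)), matvec_0; auto.
Qed.

Lemma minimizer_zero_col N A y x j : is_minimizer m N p lam A y x -> x j = 0 ->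
  is_minimizer m N p lam (zero_col A j) y x.
Proof.
  intros Hx Hx0 z.
  assert (Ex : objective m N p lam (zero_col A j) y x = obj N A y x).
  { unfold objective. do 2 f_equal. apply rsum_ext. intros i _. rewrite matvec_zero_col.
    do 2 f_equal. apply matvec_ext. intros k _. unfold upd. destruct (Nat.eq_dec k j); congruence. }
  rewrite Ex. eapply Rle_trans; [apply (Hx (upd z j 0))|]. unfold objective.
  apply Rplus_le_compat.
  - right. f_equal. apply rsum_ext. intros i _. rewrite matvec_zero_col. auto.
  - apply Rmult_le_compat_l; [lra|]. apply rsum_le. intros k _. unfold upd.
    destruct (Nat.eq_dec k j); [rewrite abspow_0; apply abspow_nonneg|lra].
Qed.

Lemma matvec_sub_le N B B' w i d X : (forall k, (k < N)%nat -> Rabs (B i k - B' i k) <= d) ->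
  (forall k, (k < N)%nat -> Rabs (w k) <= X) ->
  Rabs (matvec N B w i - matvec N B' w i) <= INR N * (d * X).
Proof.
  intros HB HX. unfold matvec. rewrite <- rsum_minus, <- rsum_const.
  eapply Rle_trans; [apply rsum_abs|]. apply rsum_le. intros k Hk.
  rewrite <- Rmult_minus_distr_r, Rabs_mult. apply Rmult_le_compat; auto; apply Rabs_pos.
Qed.

Lemma minimizer_bounded N A y x b : is_minimizer m N p lam A y x ->
  (forall i, (i < m)%nat -> Rabs (y i) <= b) ->
  (forall i, (i < m)%nat -> Rabs (y i - matvec N A x i) <= INR m * b ^ 2 + 1) /\
  (forall k, (k < N)%nat -> Rabs (x k) <= INR m * b ^ 2 / lam + 1).
Proof.
  intros Hx Hy. destruct (minimizer_le_zero N A y x Hx) as [_ Hpen].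
  assert (Hy2 : sqnorm y <= INR m * b ^ 2).
  { rewrite <- rsum_const. apply rsum_le. intros i Hi. apply pow_maj_Rabs; auto. }
  split.
  - intros i Hi. rewrite Rabs_minus_sym. pose proof (minimizer_residual_le N A y x Hx i Hi). lra.
  - intros k Hk. pose proof (abspow_ge_abs_sub1 p (x k) ltac:(lra)).
    pose proof (rsum_term_le N (fun j => abspow p (x j)) k (fun _ _ => abspow_nonneg _ _) Hk).
    cbv beta in *.
    assert (lam * abspow p (x k) <= INR m * b ^ 2).
    { assert (lam * abspow p (x k) <= lam * penalty N x) by (apply Rmult_le_compat_l; lra).
      assert (0 <= INR m * b ^ 2) by (apply Rmult_le_pos; [apply pos_INR|apply pow2_ge_0]).
      lra. }
    enough (abspow p (x k) <= INR m * b ^ 2 / lam) by lra.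
    apply Rmult_le_reg_l with lam; auto.
    replace (lam * (INR m * b ^ 2 / lam)) with (INR m * b ^ 2) by (field; lra). auto.
Qed.

(* Monotonicity of the subdifferential: adding the two variational inequalities
   bounds [|r - r'|^2] linearly in the size [d] of the perturbation. *)
Lemma minimizer_residual_stable N B B' y y' x x' d R X :
  is_minimizer m N p lam B y x -> is_minimizer m N p lam B' y' x' ->
  (forall i k, (i < m)%nat -> (k < N)%nat -> Rabs (B i k - B' i k) <= d) ->
  (forall i, (i < m)%nat -> Rabs (y i - y' i) <= d) ->
  (forall i, (i < m)%nat -> Rabs (y i - matvec N B x i) <= R) ->
  (forall i, (i < m)%nat -> Rabs (y' i - matvec N B' x' i) <= R) ->
  (forall k, (k < N)%nat -> Rabs (x k) <= X) ->
  (forall k, (k < N)%nat -> Rabs (x' k) <= X) ->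
  forall i, (i < m)%nat ->
  ((y i - matvec N B x i) - (y' i - matvec N B' x' i)) ^ 2 <= 2 * d * (INR m * R * (1 + INR N * X)).
Proof.
  intros Hx Hx' HB Hy HR HR' HX HX' i0 Hi0.
  pose proof (minimizer_variational N B y x Hx x') as H1.
  pose proof (minimizer_variational N B' y' x' Hx' x) as H2.
  set (r := fun i => y i - matvec N B x i). set (r' := fun i => y' i - matvec N B' x' i).
  set (Dl := fun i => matvec N B x' i - matvec N B' x' i).
  set (Dr := fun i => matvec N B' x i - matvec N B x i).
  assert (Hid : rsum m (fun i => (r i - r' i) ^ 2) =
     rsum m (fun i => (y i - matvec N B x i) * (matvec N B x' i - matvec N B x i))
     + rsum m (fun i => (y' i - matvec N B' x' i) * (matvec N B' x i - matvec N B' x' i))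
     + rsum m (fun i => (r i - r' i) * (y i - y' i) - r i * Dl i - r' i * Dr i)).
  { rewrite <- !rsum_plus. apply rsum_ext. intros i _. unfold r, r', Dl, Dr. ring. }
  assert (Hb : rsum m (fun i => (r i - r' i) * (y i - y' i) - r i * Dl i - r' i * Dr i)
               <= 2 * d * (INR m * R * (1 + INR N * X))).
  { replace (2 * d * (INR m * R * (1 + INR N * X)))
      with (INR m * (2 * R * d + R * (INR N * (d * X)) + R * (INR N * (d * X)))) by ring.
    rewrite <- rsum_const. apply rsum_le. intros i Hi.
    assert (HDl : Rabs (- Dl i) <= INR N * (d * X))
      by (rewrite Rabs_Ropp; apply matvec_sub_le; auto).
    assert (HDr : Rabs (- Dr i) <= INR N * (d * X))
      by (unfold Dr; rewrite Ropp_minus_distr; apply matvec_sub_le; auto).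
    assert (Hrr : Rabs (r i - r' i) <= 2 * R).
    { eapply Rle_trans; [apply Rabs_triang|]. rewrite Rabs_Ropp.
      pose proof (HR i Hi). pose proof (HR' i Hi). unfold r, r'. lra. }
    pose proof (Rmult_le_of_abs_le _ _ _ _ Hrr (Hy i Hi)).
    pose proof (Rmult_le_of_abs_le _ _ _ _ (HR i Hi) HDl).
    pose proof (Rmult_le_of_abs_le _ _ _ _ (HR' i Hi) HDr). unfold r, r' in *. lra. }
  pose proof (rsum_term_le m (fun i => (r i - r' i) ^ 2) i0 (fun _ _ => pow2_ge_0 _) Hi0).
  unfold r, r' in *. simpl in *. lra.
Qed.

Definition xmin N A y : nat -> R :=
  proj1_sig (constructive_indefinite_description _ (minimizer_exists N A y)).

Lemma xmin_spec N A y : is_minimizer m N p lam A y (xmin N A y).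
Proof. unfold xmin. destruct constructive_indefinite_description; auto. Qed.

Definition col_residual N j A y i : R :=
  y i - matvec N (zero_col A j) (xmin N (zero_col A j) y) i.

Lemma not_full_support_orth N A y :
  ~ (exists x, is_minimizer m N p lam A y x /\
       (forall z, is_minimizer m N p lam A y z -> forall j, (j < N)%nat -> z j = x j) /\
       (forall j, (j < N)%nat -> x j <> 0)) ->
  exists j, (j < N)%nat /\ rsum m (fun i => A i j * col_residual N j A y i) = 0.
Proof.
  intros Hbad. set (x := xmin N A y). pose proof (xmin_spec N A y) as Hx. fold x in Hx.
  assert (exists j, (j < N)%nat /\ x j = 0) as [j [Hj Hx0]].
  { apply NNPP. intros Hn. apply Hbad. exists x. repeat split; auto.
    - intros z Hz. apply (minimizer_unique N A y x z); auto.
    - intros j Hj Hx0. apply Hn. exists j; auto. }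
  exists j. split; auto.
  assert (Heq : forall k, (k < N)%nat -> xmin N (zero_col A j) y k = x k).
  { intros. apply (minimizer_unique N (zero_col A j) y x); auto.
    - apply minimizer_zero_col; auto.
    - apply xmin_spec. }
  rewrite <- (minimizer_zero_coord N A y x j Hx Hj Hx0). apply rsum_ext. intros i Hi.
  unfold col_residual. do 2 f_equal. rewrite (matvec_ext N _ _ x _ Heq), matvec_zero_col.
  apply matvec_ext. intros k Hk. unfold upd. destruct (Nat.eq_dec k j); subst; auto.
Qed.

Lemma col_residual_bounded N j A y b : (forall i, (i < m)%nat -> Rabs (y i) <= b) ->
  forall i, (i < m)%nat -> Rabs (col_residual N j A y i) <= INR m * b ^ 2 + 1.
Proof. intros Hy. apply (minimizer_bounded N _ y _ b (xmin_spec N (zero_col A j) y) Hy). Qed.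

Lemma col_residual_uniform_continuous N j b sg : 0 < sg -> exists del, 0 < del /\
  forall A y A' y',
  (forall i, (i < m)%nat -> Rabs (y i) <= b) -> (forall i, (i < m)%nat -> Rabs (y' i) <= b) ->
  (forall i k, (i < m)%nat -> (k < N)%nat -> k <> j -> Rabs (A i k - A' i k) <= del) ->
  (forall i, (i < m)%nat -> Rabs (y i - y' i) <= del) ->
  forall i, (i < m)%nat -> Rabs (col_residual N j A y i - col_residual N j A' y' i) <= sg.
Proof.
  intros Hsg. set (R := INR m * b ^ 2 + 1). set (X := INR m * b ^ 2 / lam + 1).
  pose proof (pos_INR m). pose proof (pos_INR N). pose proof (pow2_ge_0 b).
  assert (HR : 1 <= R) by (unfold R; nra).
  assert (HX : 1 <= X).
  { enough (0 <= INR m * b ^ 2 / lam) by (unfold X; lra).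
    apply Rmult_le_pos; [nra|left; apply Rinv_0_lt_compat; auto]. }
  set (K := 2 * (INR m * R * (1 + INR N * X))).
  assert (HK : 0 <= K).
  { unfold K. assert (0 <= INR N * X) by nra. assert (0 <= INR m * R) by nra. nra. }
  exists (sg ^ 2 / (K + 1)). split; [apply Rdiv_lt_0_compat; [apply pow_lt|]; lra|].
  intros A y A' y' Hy Hy' HA Hyd i Hi.
  destruct (minimizer_bounded N _ y _ b (xmin_spec N (zero_col A j) y) Hy) as [HR1 HX1].
  destruct (minimizer_bounded N _ y' _ b (xmin_spec N (zero_col A' j) y') Hy') as [HR2 HX2].
  assert (HB : forall k l, (k < m)%nat -> (l < N)%nat ->
                 Rabs (zero_col A j k l - zero_col A' j k l) <= sg ^ 2 / (K + 1)).
  { intros k l Hk Hl. unfold zero_col. destruct (Nat.eq_dec l j); [|apply HA; auto].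
    rewrite Rminus_diag, Rabs_R0. left; apply Rdiv_lt_0_compat; [apply pow_lt|]; lra. }
  pose proof (minimizer_residual_stable N _ _ y y' _ _ _ R X (xmin_spec N (zero_col A j) y)
                (xmin_spec N (zero_col A' j) y') HB Hyd HR1 HR2 HX1 HX2 i Hi) as Hst.
  fold K in Hst. unfold col_residual.
  assert (2 * (sg ^ 2 / (K + 1)) * (INR m * R * (1 + INR N * X)) <= sg ^ 2).
  { replace (INR m * R * (1 + INR N * X)) with (K / 2) by (unfold K; field).
    replace (2 * (sg ^ 2 / (K + 1)) * (K / 2)) with (sg ^ 2 * (K / (K + 1))) by (field; lra).
    assert (K / (K + 1) <= 1).
    { apply Rmult_le_reg_r with (K + 1); [lra|].
      unfold Rdiv. rewrite Rmult_assoc, Rinv_l by lra. lra. }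
    pose proof (pow2_ge_0 sg). nra. }
  rewrite <- (Rabs_right sg) by lra. apply Rsqr_le_abs_0. unfold Rsqr. simpl in *. lra.
Qed.

Definition data_bounded N b A y : Prop :=
  (forall i k, (i < m)%nat -> (k < N)%nat -> Rabs (A i k) <= b) /\
  (forall i, (i < m)%nat -> Rabs (y i) <= b).

(* On this piece the orthogonality relation pins [A i j] down, since the residual is
   bounded away from [0] at [i]. *)
Definition entry_piece N j i (n : nat) A y : Prop :=
  data_bounded N (INR n) A y /\
  rsum m (fun k => A k j * col_residual N j A y k) = 0 /\
  / (INR n + 1) <= Rabs (col_residual N j A y i).

Lemma entry_piece_modulus N j i n : (i < m)%nat -> (j < N)%nat ->
  forall eta, 0 < eta -> exists del, 0 < del /\ forall A y A' y',
  entry_piece N j i n A y -> entry_piece N j i n A' y' ->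
  (forall k l, (k < m)%nat -> (l < N)%nat -> k <> i \/ l <> j -> Rabs (A k l - A' k l) <= del) ->
  (forall k, (k < m)%nat -> Rabs (y k - y' k) <= del) ->
  Rabs (A i j - A' i j) <= eta.
Proof.
  intros Hi Hj eta Heta. set (b := INR n). set (R0 := INR m * b ^ 2 + 1).
  pose proof (pos_INR n). pose proof (pos_INR m).
  set (G := INR m * (R0 + b) + b).
  assert (HG : 0 <= G) by (unfold G, R0, b; pose proof (pow2_ge_0 (INR n)); nra).
  set (sg := eta / ((b + 1) * G + 1)).
  assert (Hsg : 0 < sg) by (unfold sg; apply Rdiv_lt_0_compat; unfold b in *; nra).
  destruct (col_residual_uniform_continuous N j b sg Hsg) as [dr [Hdr Hcont]].
  exists (Rmin sg dr). split; [apply Rmin_pos; auto|].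
  pose proof (Rmin_l sg dr). pose proof (Rmin_r sg dr).
  intros A y A' y' [[HA Hy] [He Hr]] [[HA' Hy'] [He' _]] Hd Hyd.
  pose proof (orth_entry_sub_le m i (fun k => A k j) (fun k => A' k j)
    (col_residual N j A y) (col_residual N j A' y') b R0 (Rmin sg dr) sg Hi
    ltac:(left; apply Rmin_pos; auto) He He' ltac:(intros k Hk Hki; apply Hd; auto)
    (col_residual_bounded N j A y b Hy) ltac:(intros k Hk; apply HA'; auto)
    (Hcont A y A' y' Hy Hy' ltac:(intros k l Hk Hl Hlj; eapply Rle_trans; [apply Hd; auto|lra])
       ltac:(intros k Hk; eapply Rle_trans; [apply Hyd; auto|lra]))) as Hai.
  cbv beta in Hai. rewrite Rabs_mult in Hai.
  assert (Hsg2 : (b + 1) * (sg * G) <= eta).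
  { replace ((b + 1) * (sg * G)) with ((b + 1) * G * sg) by ring.
    apply Rmult_div_add1_le; auto. unfold b; nra. }
  assert (Hbound : Rabs (A i j - A' i j) * / (b + 1) <= sg * G).
  { pose proof (Rabs_pos (A i j - A' i j)). pose proof (Rabs_pos (A' i j)).
    eapply Rle_trans; [apply Rmult_le_compat_l; [auto|apply Hr]|].
    assert (Rmin sg dr * R0 <= sg * R0) by (apply Rmult_le_compat_r; unfold R0, b in *; nra).
    assert (INR m * (Rmin sg dr * R0 + b * sg) <= INR m * (sg * R0 + b * sg))
      by (apply Rmult_le_compat_l; lra).
    unfold G. lra. }
  apply Rmult_le_reg_r with (/ (b + 1)); [apply Rinv_0_lt_compat; unfold b; lra|].
  apply Rle_trans with (sg * G); auto.
  apply Rmult_le_reg_l with (b + 1); [unfold b; lra|].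
  replace ((b + 1) * (eta * / (b + 1))) with eta by (field; unfold b; lra). lra.
Qed.

End Objective.

(** * Null sets *)

Lemma to_nat_diag d y : (y <= d)%nat -> Cantor.to_nat ((d - y)%nat, y) = (Cantor.to_nat (d, 0%nat) + y)%nat.
Proof. intros H. simpl. replace (y + (d - y))%nat with d by lia. lia. Qed.

Lemma to_nat_S_diag d : Cantor.to_nat (S d, 0%nat) = (Cantor.to_nat (d, 0%nat) + S d)%nat.
Proof. simpl. lia. Qed.

Lemma rsum_cantor D g :
  rsum (Cantor.to_nat (D, 0%nat)) (fun q => g (fst (Cantor.of_nat q)) (snd (Cantor.of_nat q)))
  = rsum D (fun y => rsum (D - y) (fun x => g x y)).
Proof.
  induction D as [|D IH]; [reflexivity|].
  rewrite to_nat_S_diag, rsum_add_len, IH.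
  rewrite (rsum_ext (S D) _ (fun y => g (D - y)%nat y)).
  2:{ intros y Hy. rewrite <- to_nat_diag, Cantor.cancel_of_to by lia. reflexivity. }
  rewrite (rsum_ext (S D) (fun y => rsum (S D - y) (fun x => g x y))
             (fun y => rsum (D - y) (fun x => g x y) + g (D - y)%nat y)).
  2:{ intros y Hy. replace (S D - y)%nat with (S (D - y)) by lia. reflexivity. }
  rewrite rsum_plus. simpl. rewrite Nat.sub_diag. simpl. lra.
Qed.

(* Coordinates of [(A, y)] in [R^(m N + m)]: [A] row by row, then [y]. *)
Section Flattening.

Variables m N : nat.

Definition coord (A : nat -> nat -> R) (y : nat -> R) (t : nat) : R :=
  if Nat.ltb t (m * N) then A (t / N)%nat (t mod N)%nat else y (t - m * N)%nat.

Definition flat_box (lo hi : nat -> R) : box :=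
  mkBox (fun i j => lo (i * N + j)%nat) (fun i j => hi (i * N + j)%nat)
        (fun i => lo (m * N + i)%nat) (fun i => hi (m * N + i)%nat).

Lemma coord_A A y i j : (i < m)%nat -> (j < N)%nat -> coord A y (i * N + j) = A i j.
Proof.
  intros Hi Hj. unfold coord. destruct (Nat.ltb_spec (i * N + j) (m * N)); [|nia].
  rewrite Nat.div_add_l, Nat.div_small, Nat.add_0_r by lia.
  rewrite Nat.add_comm, Nat.Div0.mod_add, Nat.mod_small; auto.
Qed.

Lemma coord_y A y i : coord A y (m * N + i) = y i.
Proof. unfold coord. destruct (Nat.ltb_spec (m * N + i) (m * N)); [lia|]. f_equal. lia. Qed.

Lemma coord_index_inj k l i j : (l < N)%nat -> (j < N)%nat -> (k * N + l = i * N + j)%nat ->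
  k = i /\ l = j.
Proof.
  intros Hl Hj E. assert (l = j).
  { apply (f_equal (fun t => (t mod N)%nat)) in E.
    rewrite !(Nat.add_comm (_ * N)), !Nat.Div0.mod_add, !Nat.mod_small in E; auto. }
  subst. split; [nia|auto].
Qed.

Lemma coord_cases t : (t < m * N + m)%nat ->
  (exists i j, (i < m)%nat /\ (j < N)%nat /\ t = (i * N + j)%nat) \/
  (exists i, (i < m)%nat /\ t = (m * N + i)%nat).
Proof.
  intros Ht. destruct (Nat.ltb_spec t (m * N)).
  - left. assert (N <> 0%nat) by (intros ->; lia).
    exists (t / N)%nat, (t mod N)%nat. repeat split.
    + apply Nat.Div0.div_lt_upper_bound. lia.
    + apply Nat.mod_upper_bound. auto.
    + rewrite (Nat.div_mod_eq t N) at 1. lia.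
  - right. exists (t - m * N)%nat. split; lia.
Qed.

Lemma in_flat_box lo hi A y : (forall t, (t < m * N + m)%nat -> lo t <= coord A y t <= hi t) ->
  in_box m N (flat_box lo hi) A y.
Proof.
  intros H. split; simpl.
  - intros i j Hi Hj. rewrite <- (coord_A A y i j) by auto. apply H. nia.
  - intros i Hi. rewrite <- (coord_y A y i). apply H. lia.
Qed.

Lemma flat_box_wf lo hi : (forall t, (t < m * N + m)%nat -> lo t <= hi t) ->
  box_wf m N (flat_box lo hi).
Proof. intros H. split; simpl; intros; apply H; nia. Qed.

Lemma rprod_flat g : rprod m (fun i => rprod N (fun j => g (i * N + j)%nat)) = rprod (m * N) g.
Proof.
  clear. induction m as [|m' IH]; [reflexivity|].
  simpl rprod at 1. rewrite IH, Nat.mul_succ_l, rprod_add_len. auto.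
Qed.

Lemma flat_box_vol lo hi : box_vol m N (flat_box lo hi) = rprod (m * N + m) (fun t => hi t - lo t).
Proof. unfold box_vol. simpl. rewrite (rprod_flat (fun t => hi t - lo t)), rprod_add_len. auto. Qed.

End Flattening.

Lemma box_vol_nonneg m N b : box_wf m N b -> 0 <= box_vol m N b.
Proof.
  intros [H1 H2]. unfold box_vol. apply Rmult_le_pos.
  - apply rprod_nonneg. intros i Hi. apply rprod_nonneg. intros j Hj. pose proof (H1 i j Hi Hj). lra.
  - apply rprod_nonneg. intros i Hi. pose proof (H2 i Hi). lra.
Qed.

Lemma lebesgue_null_finite_cover m N P : (1 <= m)%nat ->
  (forall eps, 0 < eps -> exists K (B : nat -> box),
     (forall k, (k < K)%nat -> box_wf m N (B k)) /\
     (forall A y, P A y -> exists k, (k < K)%nat /\ in_box m N (B k) A y) /\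
     rsum K (fun k => box_vol m N (B k)) <= eps) ->
  lebesgue_null m N P.
Proof.
  intros Hm H eps Heps. destruct (H eps Heps) as [K [B [Hwf [Hcov Hvol]]]].
  set (B0 := mkBox (fun _ _ => 0) (fun _ _ => 0) (fun _ => 0) (fun _ => 0)).
  assert (HB0 : box_vol m N B0 = 0).
  { unfold box_vol. simpl. rewrite (rprod_ext m (fun _ => 0 - 0) (fun _ => 0)), rprod_const
      by (intros; ring).
    destruct m; [lia|]. simpl. ring. }
  exists (fun k => if Nat.ltb k K then B k else B0). split; [|split].
  - intros k. destruct (Nat.ltb_spec k K); [apply Hwf; auto|split; simpl; intros; lra].
  - intros A y HP. destruct (Hcov A y HP) as [k [Hk Hin]]. exists k.
    destruct (Nat.ltb_spec k K); [auto|lia].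
  - intros n. eapply Rle_trans; [apply (rsum_le_support _ K)|].
    + intros k. destruct (Nat.ltb_spec k K); [apply box_vol_nonneg, Hwf; auto|lra].
    + intros k Hk. destruct (Nat.ltb_spec k K); [lia|auto].
    + rewrite (rsum_ext K _ (fun k => box_vol m N (B k))); auto.
      intros k Hk. destruct (Nat.ltb_spec k K); [auto|lia].
Qed.

Lemma lebesgue_null_countable_union m N P (F : nat -> (nat -> nat -> R) -> (nat -> R) -> Prop) :
  (forall A y, P A y -> exists k, F k A y) -> (forall k, lebesgue_null m N (F k)) ->
  lebesgue_null m N P.
Proof.
  intros HP HF eps Heps.
  assert (He : forall k, 0 < eps / 2 ^ S k) by (intros; apply Rdiv_lt_0_compat; auto; apply pow_lt; lra).
  set (Bk := fun k => proj1_sig (constructive_indefinite_description _ (HF k _ (He k)))).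
  assert (HBk : forall k, (forall l, box_wf m N (Bk k l)) /\
              (forall A y, F k A y -> exists l, in_box m N (Bk k l) A y) /\
              (forall n, rsum n (fun l => box_vol m N (Bk k l)) <= eps / 2 ^ S k))
    by (intros k; unfold Bk; destruct constructive_indefinite_description; auto).
  exists (fun q => Bk (snd (Cantor.of_nat q)) (fst (Cantor.of_nat q))). split; [|split].
  - intros q. apply HBk.
  - intros A y HPy. destruct (HP A y HPy) as [k Hk].
    destruct (proj1 (proj2 (HBk k)) A y Hk) as [l Hl].
    exists (Cantor.to_nat (l, k)). rewrite Cantor.cancel_of_to. auto.
  - intros n. eapply Rle_trans.
    { apply (rsum_le_len n (Cantor.to_nat (n, 0%nat))).
      - intros q. apply box_vol_nonneg, HBk.
      - pose proof (Cantor.to_nat_non_decreasing n 0). lia. }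
    rewrite (rsum_cantor n (fun l k => box_vol m N (Bk k l))).
    eapply Rle_trans; [apply rsum_le; intros k _; apply (proj2 (proj2 (HBk k)))|].
    rewrite rsum_geometric.
    assert (0 < eps / 2 ^ n) by (apply Rdiv_lt_0_compat; auto; apply pow_lt; lra). lra.
Qed.

Definition digit (M s k : nat) : nat := ((k / M ^ s) mod M)%nat.

Lemma digits_encode M D (Rel : nat -> nat -> Prop) : (0 < M)%nat ->
  (forall s, (s < D)%nat -> exists q, (q < M)%nat /\ Rel s q) ->
  exists k, (k < M ^ D)%nat /\ forall s, (s < D)%nat -> Rel s (digit M s k).
Proof.
  intros HM. unfold digit. induction D as [|D IH]; intros H.
  - exists 0%nat. split; [simpl; lia|intros; lia].
  - destruct IH as [k [Hk Hk']]; [intros s Hs; apply H; lia|].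
    destruct (H D ltac:(lia)) as [q [Hq Hq']].
    exists (k + q * M ^ D)%nat. split.
    + simpl. assert (k + q * M ^ D < (q + 1) * M ^ D)%nat by nia. nia.
    + intros s Hs. assert (HMs : (M ^ s <> 0)%nat) by (apply Nat.pow_nonzero; lia).
      destruct (Nat.eq_dec s D) as [->|Hne].
      * rewrite Nat.div_add, Nat.div_small, Nat.mod_small by auto. auto.
      * replace (k + q * M ^ D)%nat with (k + (q * M ^ (D - s - 1) * M) * M ^ s)%nat.
        -- rewrite Nat.div_add, Nat.Div0.mod_add by auto. apply Hk'. lia.
        -- f_equal. rewrite <- !Nat.mul_assoc. f_equal.
           rewrite <- Nat.pow_succ_r', <- Nat.pow_add_r. f_equal. lia.
Qed.

Lemma interval_cell (M : nat) (c u : R) : 0 < c -> (1 <= M)%nat -> 0 <= u <= INR M * c ->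
  exists q, (q < M)%nat /\ INR q * c <= u <= INR q * c + c.
Proof.
  intros Hc. induction M as [|M IH]; intros HM Hu; [lia|].
  destruct (Nat.eq_dec M 0) as [->|HM0]; [exists 0%nat; simpl in *; split; [lia|lra]|].
  destruct (Rle_dec u (INR M * c)).
  - destruct (IH ltac:(lia) ltac:(lra)) as [q [Hq Hq']]. exists q. split; auto; lia.
  - exists M. split; [lia|]. rewrite S_INR in Hu. lra.
Qed.

Lemma grid_cell M D (u : nat -> R) lo c : 0 < c -> (1 <= M)%nat ->
  (forall s, (s < D)%nat -> lo <= u s <= lo + INR M * c) ->
  exists k, (k < M ^ D)%nat /\ forall s, (s < D)%nat ->
    lo + INR (digit M s k) * c <= u s <= lo + INR (digit M s k) * c + c.
Proof.
  intros Hc HM Hu.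
  apply (digits_encode M D (fun s q => lo + INR q * c <= u s <= lo + INR q * c + c)); [lia|].
  intros s Hs. destruct (interval_cell M c (u s - lo) Hc HM) as [q [Hq Hq']];
    [pose proof (Hu s Hs); lra|].
  exists q. split; auto. lra.
Qed.

Definition skip (t0 s : nat) : nat := if Nat.ltb s t0 then s else S s.

Lemma skip_range t0 D s : (t0 < D)%nat -> (s < D - 1)%nat -> (skip t0 s < D)%nat /\ skip t0 s <> t0.
Proof. intros. unfold skip. destruct (Nat.ltb_spec s t0); lia. Qed.

Definition unskip (t0 t : nat) : nat := if Nat.ltb t t0 then t else pred t.

Lemma unskip_range t0 D t : (t0 < D)%nat -> (t < D)%nat -> t <> t0 ->
  (unskip t0 t < D - 1)%nat /\ skip t0 (unskip t0 t) = t.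
Proof.
  intros. unfold skip, unskip. destruct (Nat.ltb_spec t t0).
  - destruct (Nat.ltb_spec t t0); split; lia.
  - destruct (Nat.ltb_spec (pred t) t0); split; lia.
Qed.

Lemma grid_mesh L del : 0 < L -> 0 < del -> exists M : nat, (1 <= M)%nat /\ L / INR M <= del.
Proof.
  intros HL Hdel. destruct (INR_unbounded (L / del)) as [M0 HM0]. exists (S M0).
  rewrite S_INR. pose proof (pos_INR M0). split; [lia|].
  apply Rmult_le_reg_r with ((INR M0 + 1) / del); [apply Rdiv_lt_0_compat; lra|].
  replace (L / (INR M0 + 1) * ((INR M0 + 1) / del)) with (L / del) by (field; lra).
  replace (del * ((INR M0 + 1) / del)) with (INR M0 + 1) by (field; lra). lra.
Qed.

Lemma flat_slab_vol m N lo hi t0 h c : (t0 < m * N + m)%nat ->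
  (forall t, t <> t0 -> hi t - lo t = c) -> hi t0 - lo t0 = h ->
  box_vol m N (flat_box m N lo hi) = h * c ^ (m * N + m - 1).
Proof.
  intros Ht0 Hc Hh. rewrite flat_box_vol, <- (rprod_single _ t0 h c Ht0).
  apply rprod_ext. intros t _. destruct (Nat.eq_dec t t0) as [->|]; auto.
Qed.

(* Grid the coordinates other than [t0] into [M^(D-1)] cubes of side [c <= del]; over each
   cube the set lies in a slab of height [2 eta] around its value at one chosen point. *)
Lemma lebesgue_null_graph m N (P : (nat -> nat -> R) -> (nat -> R) -> Prop) t0 b :
  (t0 < m * N + m)%nat -> 0 <= b ->
  (forall A y, P A y -> forall t, (t < m * N + m)%nat -> Rabs (coord m N A y t) <= b) ->
  (forall eta, 0 < eta -> exists del, 0 < del /\ forall A y A' y', P A y -> P A' y' ->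
     (forall t, (t < m * N + m)%nat -> t <> t0 ->
        Rabs (coord m N A y t - coord m N A' y' t) <= del) ->
     Rabs (coord m N A y t0 - coord m N A' y' t0) <= eta) ->
  lebesgue_null m N P.
Proof.
  intros Ht0 Hb Hbd Hmod. apply lebesgue_null_finite_cover; [nia|]. intros eps Heps.
  set (D := (m * N + m)%nat) in *. set (D' := (D - 1)%nat).
  set (L := 2 * b + 1). assert (HL : 0 < L) by (unfold L; lra).
  assert (HLD : 0 < L ^ D') by (apply pow_lt; auto).
  set (eta := eps / (2 * L ^ D')).
  assert (Heta : 0 < eta) by (unfold eta; apply Rdiv_lt_0_compat; lra).
  destruct (Hmod eta Heta) as [del [Hdel Hm]].
  destruct (grid_mesh L del HL Hdel) as [M [HM1 Hcd]].
  assert (HM : 0 < INR M) by (apply lt_0_INR; lia).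
  set (c := L / INR M) in Hcd. assert (Hc : 0 < c) by (unfold c; apply Rdiv_lt_0_compat; lra).
  assert (HcM : INR M * c = L) by (unfold c; field; lra).
  set (cell := fun k A y => forall s, (s < D')%nat ->
     - b + INR (digit M s k) * c <= coord m N A y (skip t0 s) <= - b + INR (digit M s k) * c + c).
  set (pt := fun k => epsilon (inhabits ((fun _ _ : nat => 0), (fun _ : nat => 0)))
                        (fun Q => P (fst Q) (snd Q) /\ cell k (fst Q) (snd Q))).
  set (a0 := fun k => coord m N (fst (pt k)) (snd (pt k)) t0).
  set (lo := fun k t => if Nat.eq_dec t t0 then a0 k - eta
                        else - b + INR (digit M (unskip t0 t) k) * c).
  set (hi := fun k t => if Nat.eq_dec t t0 then a0 k + eta
                        else - b + INR (digit M (unskip t0 t) k) * c + c).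
  exists (M ^ D')%nat, (fun k => flat_box m N (lo k) (hi k)). split; [|split].
  - intros k _. apply flat_box_wf. intros t _. unfold lo, hi. destruct (Nat.eq_dec t t0); lra.
  - intros A y HP.
    destruct (grid_cell M D' (fun s => coord m N A y (skip t0 s)) (- b) c Hc HM1)
      as [k [Hk Hcell]].
    { intros s Hs. destruct (skip_range t0 D s Ht0 Hs) as [Hts _].
      pose proof (Hbd A y HP (skip t0 s) Hts) as Hb'. rewrite HcM. unfold L.
      apply Rabs_le_between in Hb'. lra. }
    assert (Hpt : P (fst (pt k)) (snd (pt k)) /\ cell k (fst (pt k)) (snd (pt k)))
      by (apply epsilon_spec; exists (A, y); auto).
    destruct Hpt as [HPk Hck].
    exists k. split; auto. apply in_flat_box. intros t Ht. unfold lo, hi.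
    destruct (Nat.eq_dec t t0) as [->|Htt0].
    + enough (Rabs (coord m N A y t0 - a0 k) <= eta) by (apply Rabs_le_between in H; lra).
      apply Hm; auto. intros t Ht' Hne.
      destruct (unskip_range t0 D t Ht0 Ht' Hne) as [Hs1 Hs2].
      pose proof (Hcell _ Hs1). pose proof (Hck _ Hs1). cbv beta in *. rewrite Hs2 in *.
      eapply Rle_trans; [|apply Hcd]. apply Rabs_le. lra.
    + destruct (unskip_range t0 D t Ht0 Ht Htt0) as [Hs1 Hs2].
      pose proof (Hcell _ Hs1). cbv beta in *. rewrite Hs2 in *. auto.
  - rewrite (rsum_ext _ _ (fun _ => 2 * eta * c ^ D')).
    + rewrite rsum_const, pow_INR, <- Rmult_assoc, (Rmult_comm (INR M ^ D')), Rmult_assoc,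
        <- Rpow_mult_distr, HcM. unfold eta. right. field. lra.
    + intros k _. apply (flat_slab_vol m N _ _ t0); auto; unfold lo, hi.
      * intros t Htt0. destruct (Nat.eq_dec t t0); [congruence|ring].
      * destruct (Nat.eq_dec t0 t0); [ring|congruence].
Qed.

(** * The exceptional set *)

Lemma coord_bounded m N b A y : data_bounded m N b A y ->
  forall t, (t < m * N + m)%nat -> Rabs (coord m N A y t) <= b.
Proof.
  intros [HA Hy] t Ht. destruct (coord_cases m N t Ht) as [[i [j [Hi [Hj ->]]]]|[i [Hi ->]]].
  - rewrite coord_A; auto.
  - rewrite coord_y; auto.
Qed.

Lemma data_bounded_le m N b b' A y : b <= b' -> data_bounded m N b A y -> data_bounded m N b' A y.
Proof.
  intros Hb [HA Hy]. split.
  - intros i k Hi Hk. pose proof (HA i k Hi Hk). lra.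
  - intros i Hi. pose proof (Hy i Hi). lra.
Qed.

Lemma data_bounded_exists m N A y : exists n : nat, data_bounded m N (INR n) A y.
Proof.
  assert (Hall : forall D, exists n : nat, forall t, (t < D)%nat -> Rabs (coord m N A y t) <= INR n).
  { induction D as [|D [n Hn]]; [exists 0%nat; intros; lia|].
    destruct (INR_unbounded (Rabs (coord m N A y D))) as [n2 Hn2].
    exists (Nat.max n n2). intros t Ht.
    pose proof (le_INR n (Nat.max n n2) ltac:(lia)). pose proof (le_INR n2 (Nat.max n n2) ltac:(lia)).
    destruct (Nat.eq_dec t D) as [->|]; [lra|]. pose proof (Hn t ltac:(lia)). lra. }
  destruct (Hall (m * N + m)%nat) as [n Hn]. exists n. split.
  - intros i k Hi Hk. rewrite <- (coord_A m N A y i k) by auto. apply Hn. nia.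
  - intros i Hi. rewrite <- (coord_y m N A y i). apply Hn. lia.
Qed.

Definition zero_data_piece m N (n : nat) A y : Prop :=
  data_bounded m N (INR n) A y /\ forall i, (i < m)%nat -> y i = 0.

Lemma zero_data_piece_null m N n : (1 <= m)%nat -> lebesgue_null m N (zero_data_piece m N n).
Proof.
  intros Hm. apply (lebesgue_null_graph m N _ (m * N) (INR n)); [lia|apply pos_INR| |].
  - intros A y [Hb _]. apply coord_bounded; auto.
  - intros eta Heta. exists 1. split; [lra|]. intros A y A' y' [_ Hy] [_ Hy'] _.
    rewrite <- (Nat.add_0_r (m * N)), !coord_y, Hy, Hy' by lia.
    rewrite Rminus_diag, Rabs_R0. lra.
Qed.

Lemma entry_piece_null m p lam hp hlam N j i n : (i < m)%nat -> (j < N)%nat ->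
  lebesgue_null m N (entry_piece m p lam hp hlam N j i n).
Proof.
  intros Hi Hj. apply (lebesgue_null_graph m N _ (i * N + j) (INR n)); [nia|apply pos_INR| |].
  - intros A y [Hb _]. apply coord_bounded; auto.
  - intros eta Heta.
    destruct (entry_piece_modulus m p lam hp hlam N j i n Hi Hj eta Heta) as [del [Hdel Hmod]].
    exists del. split; auto. intros A y A' y' HP HP' Hc.
    rewrite (coord_A m N A y i j), (coord_A m N A' y' i j) by auto. apply (Hmod A y A' y'); auto.
    + intros k l Hk Hl Hkl. rewrite <- (coord_A m N A y k l), <- (coord_A m N A' y' k l) by auto.
      apply Hc; [nia|]. intros E. apply coord_index_inj in E; [|auto|auto]. lia.
    + intros k Hk. rewrite <- (coord_y m N A y k), <- (coord_y m N A' y' k). apply Hc; nia.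
Qed.

(* Index [q] encodes [(j, i, n)]; [i = m] (or any out-of-range index) selects [y = 0]. *)
Definition exceptional_piece m p lam hp hlam N (q : nat) : (nat -> nat -> R) -> (nat -> R) -> Prop :=
  let '(a, n) := Cantor.of_nat q in
  let '(j, i) := Cantor.of_nat a in
  if andb (Nat.ltb i m) (Nat.ltb j N) then entry_piece m p lam hp hlam N j i n
  else zero_data_piece m N n.

Lemma exceptional_piece_null m p lam hp hlam N q : (1 <= m)%nat ->
  lebesgue_null m N (exceptional_piece m p lam hp hlam N q).
Proof.
  intros Hm. unfold exceptional_piece.
  destruct (Cantor.of_nat q) as [a n]. destruct (Cantor.of_nat a) as [j i].
  destruct (Nat.ltb_spec i m), (Nat.ltb_spec j N); simpl;
    [apply entry_piece_null; auto|apply zero_data_piece_null; auto..].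
Qed.

Lemma exceptional_covered m p lam (hp : 1 < p) (hlam : 0 < lam) N A y :
  ~ (exists x, is_minimizer m N p lam A y x /\
       (forall z, is_minimizer m N p lam A y z -> forall j, (j < N)%nat -> z j = x j) /\
       (forall j, (j < N)%nat -> x j <> 0)) ->
  exists q, exceptional_piece m p lam hp hlam N q A y.
Proof.
  intros Hbad. destruct (not_full_support_orth m p lam hp hlam N A y Hbad) as [j [Hj Horth]].
  destruct (data_bounded_exists m N A y) as [n1 Hn1].
  set (rho := col_residual m p lam hp hlam N j A y).
  destruct (classic (exists i, (i < m)%nat /\ rho i <> 0)) as [[i [Hi Hr]]|Hz].
  - destruct (INR_unbounded (/ Rabs (rho i))) as [n2 Hn2].
    pose proof (Rabs_pos (rho i)). pose proof (Rabs_no_R0 _ Hr). pose proof (pos_INR n2).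
    set (n := Nat.max n1 n2).
    exists (Cantor.to_nat (Cantor.to_nat (j, i), n)). unfold exceptional_piece.
    rewrite !Cantor.cancel_of_to. destruct (Nat.ltb_spec i m), (Nat.ltb_spec j N); try lia.
    simpl. split; [|split; auto].
    + apply (data_bounded_le _ _ (INR n1)); auto. apply le_INR. lia.
    + apply Rle_trans with (/ (INR n2 + 1)).
      * apply Rinv_le_contravar; [lra|]. pose proof (le_INR n2 n ltac:(lia)). lra.
      * fold (rho i). rewrite <- (Rinv_inv (Rabs (rho i))). apply Rinv_le_contravar;
          [apply Rinv_0_lt_compat|]; lra.
  - exists (Cantor.to_nat (Cantor.to_nat (j, m), n1)). unfold exceptional_piece.
    rewrite !Cantor.cancel_of_to, Nat.ltb_irrefl. simpl. split; auto.
    apply (minimizer_zero_residual m p lam hp hlam N (zero_col A j) y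
             (xmin m p lam hp hlam N (zero_col A j) y) (xmin_spec m p lam hp hlam N _ y)).
    intros i Hi. apply NNPP. intros Hne. apply Hz. exists i. split; auto.
    unfold rho, col_residual. lra.
Qed.

Theorem theorem4p2 (p lam : R) (m N : nat)
  (hp : 1 < p) (hm : (1 <= m)%nat) (hNm : (m <= N)%nat) (hlam : 0 < lam) :
  lebesgue_null m N (fun A y =>
    ~ (exists x : nat -> R,
         is_minimizer m N p lam A y x /\
         (forall z, is_minimizer m N p lam A y z -> forall j, (j < N)%nat -> z j = x j) /\
         (forall j, (j < N)%nat -> x j <> 0))).
Proof.
  apply (lebesgue_null_countable_union m N _ (exceptional_piece m p lam hp hlam N)).
  - intros A y. apply exceptional_covered.
  - intros q. apply exceptional_piece_null; auto.
Qed.
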